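(* Let $(\Re,S,V)$ be a vector $S$-metric space and let $H,K,P,Q:\Re\to\Re$ be four maps such that there is $\rho\in[0,1)$ with $$S(Hx,Hy,Kz)\preceq \rho\, U(x,y,z)\quad\text{for all } x,y,z\in\Re,$$ where $$U(x,y,z)=\max\{S(Px,Py,Qz),\ S(Px,Px,Hx),\ S(Qz,Qz,Kz),\ S(Qz,Qz,Hx)\}$$ (the maximum being the supremum in $V$), and suppose the pairs $(H,P)$ and $(K,Q)$ are occasionally weakly compatible. Then $H,K,P,Q$ have a unique common fixed point in $\Re$, i.e. there is exactly one $\xi\in\Re$ with $H\xi=K\xi=P\xi=Q\xi=\xi$.
   Context: A vector lattice (Riesz space) $V$ is an ordered real vector space whose order $\preceq$ is a lattice order; $\max$ of finitely many elements of $V$ denotes their supremum. Given a vector lattice $V$ and a nonempty set $\Re$, a vector $S$-metric is a map $S:\Re^3\to V$ such that for all $x_1,x_2,x_3,\alpha\in\Re$: (a) $S(x_1,x_2,x_3)\succeq 0$; (b) $S(x_1,x_2,x_3)=0$ iff $x_1=x_2=x_3$; (c) $S(x_1,x_2,x_3)\preceq S(x_1,x_2,\alpha)+S(x_2,x_2,\alpha)+S(x_3,x_3,\alpha)$. The triple $(\Re,S,V)$ is a vector $S$-metric space. Two maps $A,B:\Re\to\Re$ are occasionally weakly compatible if there exists a coincidence point $x\in\Re$ of $A$ and $B$ (i.e. $Ax=Bx$) such that $ABx=BAx$. *)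

From HB Require Import structures.
From mathcomp Require Import all_boot all_order all_algebra.
From mathcomp Require Import reals.
Set Implicit Arguments. Unset Strict Implicit. Unset Printing Implicit Defensive.
Import Order.TTheory GRing.Theory Num.Theory.
Local Open Scope ring_scope.

Record vector_lattice (R : realType) (V : lmodType R) := VectorLattice {
  vle : V -> V -> Prop;
  vjoin : V -> V -> V;
  vle_refl : forall x, vle x x;
  vle_anti : forall x y, vle x y -> vle y x -> x = y;
  vle_trans : forall x y z, vle x y -> vle y z -> vle x z;
  vle_add : forall x y z, vle x y -> vle (x + z) (y + z);
  vle_scale : forall (a : R) x y, 0 <= a -> vle x y -> vle (a *: x) (a *: y);
  vjoin_ubl : forall x y, vle x (vjoin x y);
  vjoin_ubr : forall x y, vle y (vjoin x y);
  vjoin_lub : forall x y z, vle x z -> vle y z -> vle (vjoin x y) z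
}.

Definition vmax4 (R : realType) (V : lmodType R) (L : vector_lattice V)
  (a b c d : V) : V := vjoin L (vjoin L (vjoin L a b) c) d.

Definition is_vector_Smetric (R : realType) (V : lmodType R)
  (L : vector_lattice V) (X : Type) (S : X -> X -> X -> V) : Prop :=
  (forall x1 x2 x3, vle L 0 (S x1 x2 x3)) /\
  (forall x1 x2 x3, S x1 x2 x3 = 0 <-> (x1 = x2 /\ x2 = x3)) /\
  (forall x1 x2 x3 a,
      vle L (S x1 x2 x3) (S x1 x2 a + S x2 x2 a + S x3 x3 a)).

Definition owc (X : Type) (A B : X -> X) : Prop :=
  exists x, A x = B x /\ A (B x) = B (A x).

From mathcomp Require Import all_boot all_order all_algebra.
From mathcomp Require Import reals.
Import Order.TTheory GRing.Theory Num.Theory.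
Local Open Scope ring_scope.
Set Implicit Arguments. Unset Strict Implicit.

(* Every use of the contractive condition below has the shape
   S(a,a,b) <= rho max{S(a,a,b), S(a,a,a), S(b,b,b), S(b,b,a)}, and since
   S(b,b,a) <= S(a,a,b) this forces a = b.  At coincidence points x of (H,P)
   and y of (K,Q) it gives Hx = Ky: all coincidence values agree.  Weak
   compatibility makes the common value w = Hu a coincidence point of both
   pairs, so Hw = Kw = w; and a common fixed point is a coincidence point of
   both pairs, hence equal to w. *)

Section VectorLattice.

Variables (R : realType) (V : lmodType R) (L : vector_lattice V).

Lemma vle_contract_eq0 (rho : R) (d : V) : 0 <= rho -> rho < 1 ->
  vle L 0 d -> vle L d (rho *: d) -> d = 0.
Proof.
move=> rho_ge0 rho_lt1 d_ge0 d_le.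
have rho1_neq0 : 1 - rho != 0 by rewrite subr_eq0 eq_sym lt_eqF.
have inv_ge0 : 0 <= (1 - rho)^-1 by rewrite invr_ge0 subr_ge0 ltW.
have d_le0 : vle L ((1 - rho) *: d) 0.
  by rewrite scalerBl scale1r -(subrr (rho *: d)); apply: vle_add.
have := vle_scale inv_ge0 d_le0.
rewrite scalerA mulVf // scale1r scaler0 => d_le0'.
exact: vle_anti d_le0' d_ge0.
Qed.

Lemma vmax4_lub (a b c d e : V) :
  vle L a e -> vle L b e -> vle L c e -> vle L d e -> vle L (vmax4 L a b c d) e.
Proof. by move=> ae be ce de; rewrite /vmax4; do 3! apply: vjoin_lub => //. Qed.

End VectorLattice.

Section VectorSMetric.

Variables (R : realType) (V : lmodType R) (L : vector_lattice V).
Variables (X : Type) (S : X -> X -> X -> V).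
Hypothesis hS : is_vector_Smetric L S.

Lemma Smetric_diag (a : X) : S a a a = 0.
Proof. by case: hS => _ [S_eq0 _]; apply/S_eq0. Qed.

Lemma Smetric_swap_le (a b : X) : vle L (S b b a) (S a a b).
Proof.
case: hS => _ [_ S_tri].
by have := S_tri b b a b; rewrite !Smetric_diag !add0r.
Qed.

Lemma Smetric_contract_eq (rho : R) (a b : X) : 0 <= rho -> rho < 1 ->
  vle L (S a a b)
    (rho *: vmax4 L (S a a b) (S a a a) (S b b b) (S b b a)) -> a = b.
Proof.
move=> rho_ge0 rho_lt1 hab; case: (hS) => S_ge0 [S_eq0 _].
have max_le : vle L (vmax4 L (S a a b) (S a a a) (S b b b) (S b b a)) (S a a b).
  apply: vmax4_lub; rewrite ?Smetric_diag //;
    [exact: vle_refl | exact: Smetric_swap_le].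
have := vle_contract_eq0 rho_ge0 rho_lt1 (S_ge0 a a b)
          (vle_trans hab (vle_scale rho_ge0 max_le)).
by move/S_eq0 => [].
Qed.

Lemma coincidence_values_eq (H K P Q : X -> X) (rho : R) :
  0 <= rho -> rho < 1 ->
  (forall x y z,
     vle L (S (H x) (H y) (K z))
       (rho *: vmax4 L (S (P x) (P y) (Q z)) (S (P x) (P x) (H x))
                       (S (Q z) (Q z) (K z)) (S (Q z) (Q z) (H x)))) ->
  forall x y, H x = P x -> K y = Q y -> H x = K y.
Proof.
move=> rho_ge0 rho_lt1 hc x y HPx KQy.
by apply: (Smetric_contract_eq rho_ge0 rho_lt1); have := hc x x y;
  rewrite -HPx -KQy.
Qed.

End VectorSMetric.

Theorem theorem2p3 (R : realType) (V : lmodType R) (L : vector_lattice V)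
  (X : Type) (x0 : X) (S : X -> X -> X -> V) (H K P Q : X -> X) (rho : R) :
  is_vector_Smetric L S ->
  0 <= rho -> rho < 1 ->
  (forall x y z,
     vle L (S (H x) (H y) (K z))
       (rho *: vmax4 L (S (P x) (P y) (Q z)) (S (P x) (P x) (H x))
                       (S (Q z) (Q z) (K z)) (S (Q z) (Q z) (H x)))) ->
  owc H P -> owc K Q ->
  exists! xi : X, H xi = xi /\ K xi = xi /\ P xi = xi /\ Q xi = xi.
Proof.
move=> hS rho_ge0 rho_lt1 hc [u [HPu HPu_comm]] [v [KQv KQv_comm]].
have agree := coincidence_values_eq hS rho_ge0 rho_lt1 hc.
set w := H u.
have w_Kv : w = K v by apply: agree.
have HPw : H w = P w by rewrite /w {1}HPu HPu_comm.
have KQw : K w = Q w by rewrite w_Kv {1}KQv KQv_comm.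
have Hw : H w = w by rewrite {2}w_Kv; apply: agree.
have Kw : K w = w by symmetry; apply: agree.
exists w; split; first by rewrite -HPw -KQw Hw Kw.
move=> z [_ [Kz [_ Qz]]].
by rewrite -Hw -Kz; apply: agree HPw _; rewrite Kz Qz.
Qed.
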